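(* If $r\ge 2$, then the glued binary tree $GT(r)$ satisfies ${\rm gp}_{\rm t}(GT(r))={\rm gp}_{\rm d}(GT(r))=0$.
   Context: A perfect binary tree of depth $r\ge1$ is a rooted tree in which every non-leaf vertex has exactly $2$ children and all leaves have depth $r$. The glued binary tree $GT(r)$ is obtained from two copies of the perfect binary tree of depth $r$ by pairwise identifying their leaves (via a fixed isomorphism of the copies). For $S\subseteq V(G)$, two vertices $u,v$ are $S$-positionable if every shortest $u,v$-path $P$ satisfies $V(P)\cap S\subseteq\{u,v\}$. $S$ is a general position set if every two vertices of $S$ are $S$-positionable; $S$ is a dual general position set if it is a general position set and every two vertices of $V(G)\setminus S$ are $S$-positionable; $S$ is a total general position set if every two vertices of $G$ are $S$-positionable. ${\rm gp}_{\rm d}(G)$ and ${\rm gp}_{\rm t}(G)$ are the maximum sizes of a dual, respectively total, general position set of $G$. *)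

From mathcomp Require Import all_boot.
From Stdlib Require Import ClassicalEpsilon.

Set Implicit Arguments.
Unset Strict Implicit.
Unset Printing Implicit Defensive.

Definition asb (P : Prop) : bool :=
  if excluded_middle_informative P then true else false.

Section GeneralPosition.
Variables (T : finType) (e : rel T).

(* [u :: p] is a shortest u,v-path: a walk from u to v of minimum length
   (a walk of minimum length is automatically a path). *)
Definition shortest_path (u v : T) (p : seq T) : Prop :=
  [/\ path e u p, last u p = v &
      forall q : seq T, path e u q -> last u q = v -> size p <= size q].

Definition positionable (S : {set T}) (u v : T) : Prop :=
  forall p : seq T, shortest_path u v p ->
  forall x : T, x \in u :: p -> x \in S -> x = u \/ x = v.

Definition gp_set (S : {set T}) : Prop :=
  forall u v, u \in S -> v \in S -> positionable S u v.

Definition dual_gp_set (S : {set T}) : Prop :=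
  gp_set S /\ (forall u v, u \notin S -> v \notin S -> positionable S u v).

Definition total_gp_set (S : {set T}) : Prop :=
  forall u v, positionable S u v.

Definition gpd : nat := \max_(S : {set T} | asb (dual_gp_set S)) #|S|.
Definition gpt : nat := \max_(S : {set T} | asb (total_gp_set S)) #|S|.

End GeneralPosition.

(* A perfect binary tree of depth r is encoded
   in heap order: vertices 1 .. 2^(r+1)-1, the children of i are 2i and 2i+1,
   the leaves are 2^r .. 2^(r+1)-1.  A vertex of GT(r) is a pair (i, b) where
   b : bool indicates the copy; leaves (shared by both copies) are only
   represented with b = false. *)
Definition GTV (r : nat) :=
  {x : 'I_(2 ^ r.+1) * bool | (0 < x.1) && (x.2 ==> (x.1 < 2 ^ r))}.

Definition GTadj (r : nat) : rel (GTV r) :=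
  fun x y =>
    let i := (val x).1 in let j := (val y).1 in
    let b := (val x).2 in let c := (val y).2 in
    ((j./2 == i) || (i./2 == j)) &&
    [|| b == c, 2 ^ r <= i | 2 ^ r <= j].

(* If a - x - b is an induced path (a <> b not adjacent), then a x b is a
   shortest a,b-path, so x lies in no set S for which a and b are
   S-positionable.  In GT(r) every vertex is the middle of such a path, so
   total general position sets are empty.  For a dual set S containing x, the
   ends a and b must lie on different sides of S.  An inner vertex has three
   pairwise non-adjacent neighbours, which cannot pairwise lie on different
   sides, so inner vertices avoid S; the root and the leaves are the middle of
   an induced path between two inner vertices, which then lie on the same
   side, so they avoid S as well. *)
From mathcomp Require Import all_boot.
From mathcomp Require Import zify.
From Stdlib Require Import ClassicalEpsilon.
Set Implicit Arguments.
Unset Strict Implicit.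

Lemma asbP (P : Prop) : asb P -> P.
Proof. by rewrite /asb; case: excluded_middle_informative. Qed.

Lemma max_card_eq0 (T : finType) (P : {set T} -> Prop) :
  (forall S, P S -> forall x, x \notin S) -> \max_(S | asb (P S)) #|S| = 0.
Proof.
move=> empty; apply: big1 => S /asbP PS; apply/eqP.
by rewrite cards_eq0; apply/eqP/setP => x; rewrite inE (negbTE (empty S PS x)).
Qed.

Section InducedPaths.
Variables (T : finType) (e : rel T).
Hypothesis e_irr : irreflexive e.

Definition induced_p3 (a x b : T) : Prop := [/\ e a x, e x b, a != b & ~~ e a b].

Definition claw_center (x : T) : Prop :=
  exists a b c, [/\ induced_p3 a x b, induced_p3 a x c & induced_p3 b x c].

Lemma induced_p3_shortest a x b :
  induced_p3 a x b -> shortest_path e a b [:: x; b].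
Proof.
case=> eax exb nab nadj; split => //=; first by rewrite eax exb.
case=> [|y [|z q]] //= => [_ ab | /andP[eay _] yb]; last by rewrite -yb eay in nadj.
by rewrite ab eqxx in nab.
Qed.

Lemma induced_p3_notin S a x b :
  induced_p3 a x b -> positionable e S a b -> x \notin S.
Proof.
move=> P3 pos; apply/negP => xS; case: (P3) => eax exb _ _.
have [] := pos _ (induced_p3_shortest P3) x _ xS; first by rewrite !inE eqxx orbT.
- by move=> xa; rewrite xa e_irr in eax.
- by move=> xb; rewrite xb e_irr in exb.
Qed.

Lemma dual_gp_induced_p3 S a x b :
  dual_gp_set e S -> induced_p3 a x b -> x \in S -> (a \in S) != (b \in S).
Proof.
case=> gpS gpC P3 xS; apply/negP => /eqP ab.
have pos : positionable e S a b.
  by case aS: (a \in S); [apply: gpS; rewrite -?ab | apply: gpC; rewrite -?ab aS].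
by move: (induced_p3_notin P3 pos); rewrite xS.
Qed.

Lemma dual_gp_claw_center_notin S x :
  dual_gp_set e S -> claw_center x -> x \notin S.
Proof.
move=> D [a [b [c [Pab Pac Pbc]]]]; apply/negP => xS.
move: (dual_gp_induced_p3 D Pab xS) (dual_gp_induced_p3 D Pac xS).
move: (dual_gp_induced_p3 D Pbc xS).
by case: (a \in S); case: (b \in S); case: (c \in S).
Qed.

Lemma gpt_eq0 : (forall x, exists a b, induced_p3 a x b) -> gpt e = 0.
Proof.
move=> mid; apply: max_card_eq0 => S tot x.
by have [a [b P3]] := mid x; apply: induced_p3_notin P3 (tot a b).
Qed.

Lemma gpd_eq0 :
  (forall x, claw_center x \/
     exists a b, [/\ induced_p3 a x b, claw_center a & claw_center b]) ->
  gpd e = 0.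
Proof.
move=> cover; apply: max_card_eq0 => S D x.
case: (cover x) => [|[a [b [P3 ca cb]]]]; first exact: dual_gp_claw_center_notin.
apply/negP => /(dual_gp_induced_p3 D P3).
by rewrite !(negbTE (dual_gp_claw_center_notin D _)).
Qed.

End InducedPaths.

Section GluedTree.
Variable r : nat.

Definition idx (x : GTV r) : nat := (val x).1.
Definition copy (x : GTV r) : bool := (val x).2.

Definition inner_vertex (x : GTV r) : bool := 2 <= idx x < 2 ^ r.

Lemma GTadjE (x y : GTV r) : GTadj x y =
  (((idx y)./2 == idx x) || ((idx x)./2 == idx y)) &&
  [|| copy x == copy y, 2 ^ r <= idx x | 2 ^ r <= idx y].
Proof. by []. Qed.

Lemma idx_gt0 (x : GTV r) : 0 < idx x.
Proof. by case: x => [[i b] h]; rewrite /idx /=; case/andP: h. Qed.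

Lemma idx_lt (x : GTV r) : idx x < 2 * 2 ^ r.
Proof. by rewrite -expnS; apply: ltn_ord. Qed.

Lemma GTV_exists i b : 0 < i < 2 * 2 ^ r -> b ==> (i < 2 ^ r) ->
  exists x : GTV r, idx x = i /\ copy x = b.
Proof.
rewrite -expnS => /andP[i_gt0 i_lt] bi.
by exists (exist _ (Ordinal i_lt, b) (introT andP (conj i_gt0 bi))).
Qed.

Lemma GTadj_irr : irreflexive (@GTadj r).
Proof. by move=> x; have := idx_gt0 x; rewrite GTadjE -divn2; apply: contraTF; lia. Qed.

Lemma GTadj_sym : symmetric (@GTadj r).
Proof.
move=> x y; rewrite !GTadjE (orbC ((idx x)./2 == _)) (eq_sym (copy y)).
by rewrite (orbC (2 ^ r <= idx x)).
Qed.

Lemma idx_neq (x y : GTV r) : idx x != idx y -> x != y.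
Proof. by apply: contraNneq => ->. Qed.

Lemma GTadj_half (x y : GTV r) :
  GTadj x y -> ((idx y)./2 == idx x) || ((idx x)./2 == idx y).
Proof. by rewrite GTadjE => /andP[]. Qed.

(* A child keeps the copy of its parent unless it is a leaf; leaves are in
   copy [false]. *)
Lemma GTadj_child (x y : GTV r) :
  (idx y)./2 = idx x -> copy y = copy x && (idx y < 2 ^ r) -> GTadj x y.
Proof.
rewrite GTadjE => -> ->; rewrite eqxx /=.
by case: ltnP; rewrite ?andbT ?eqxx ?orbT.
Qed.

Lemma inner_claw_center (x : GTV r) : inner_vertex x -> claw_center (@GTadj r) x.
Proof.
move=> /andP[x_ge2 x_lt].
have [p [p_idx p_copy]] : exists p : GTV r, idx p = (idx x)./2 /\ copy p = copy x.
  by apply: GTV_exists; rewrite -?divn2; [lia | apply/implyP; lia].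
have [c [c_idx c_copy]] : exists c : GTV r,
    idx c = (idx x).*2 /\ copy c = copy x && ((idx x).*2 < 2 ^ r).
  by apply: GTV_exists; [lia | apply/implyP => /andP[]].
have [d [d_idx d_copy]] : exists d : GTV r,
    idx d = (idx x).*2.+1 /\ copy d = copy x && ((idx x).*2.+1 < 2 ^ r).
  by apply: GTV_exists; [lia | apply/implyP => /andP[]].
have px : GTadj p x by apply: GTadj_child; rewrite ?p_idx ?p_copy ?x_lt ?andbT.
have xc : GTadj x c by apply: GTadj_child; rewrite ?c_idx ?doubleK.
have xd : GTadj x d by apply: GTadj_child; rewrite ?d_idx -?divn2 //; lia.
exists p, c, d; split; split; rewrite // ?(GTadj_sym c) //;
  try apply: idx_neq; try (apply/negP => /GTadj_half);
  rewrite ?p_idx ?c_idx ?d_idx -?divn2; lia.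
Qed.

Lemma outer_induced_p3 (x : GTV r) : 2 <= r -> ~~ inner_vertex x ->
  exists a b, [/\ induced_p3 (@GTadj r) a x b, inner_vertex a & inner_vertex b].
Proof.
move=> r_ge2; have r4 : 2 ^ 2 <= 2 ^ r := @leq_pexp2l 2 _ _ isT r_ge2.
have x_gt0 := idx_gt0 x; have x_lt := idx_lt x.
rewrite /inner_vertex; case: (ltnP (idx x) 2) => [x_root _ | x_ge2 /= x_leaf].
- have [a [a_idx a_copy]] : exists a : GTV r, idx a = 2 /\ copy a = copy x.
    by apply: GTV_exists; [lia | apply/implyP; lia].
  have [b [b_idx b_copy]] : exists b : GTV r, idx b = 3 /\ copy b = copy x.
    by apply: GTV_exists; [lia | apply/implyP; lia].
  exists a, b; split; [split; try apply: idx_neq | |];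
    rewrite ?GTadjE ?a_idx ?a_copy ?b_idx ?b_copy ?eqxx ?andbT -?divn2; lia.
- have [a [a_idx a_copy]] : exists a : GTV r, idx a = (idx x)./2 /\ copy a = false.
    by apply: GTV_exists; rewrite -?divn2; lia.
  have [b [b_idx b_copy]] : exists b : GTV r, idx b = (idx x)./2 /\ copy b = true.
    by apply: GTV_exists; rewrite -?divn2 /=; lia.
  have a_neq_b : a != b by apply/negP => /eqP ab; move: a_copy; rewrite ab b_copy.
  exists a, b; split; [split | |];
    rewrite // ?GTadjE ?a_idx ?a_copy ?b_idx ?b_copy -?divn2; lia.
Qed.

Lemma claw_center_or_between_claws (x : GTV r) : 2 <= r ->
  claw_center (@GTadj r) x \/ exists a b,
    [/\ induced_p3 (@GTadj r) a x b, claw_center (@GTadj r) a & claw_center (@GTadj r) b].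
Proof.
move=> r_ge2; case: (boolP (inner_vertex x)) => [/inner_claw_center | ]; first by left.
move/(outer_induced_p3 r_ge2).
by case=> [a [b [P3 /inner_claw_center ca /inner_claw_center cb]]]; right; exists a, b.
Qed.

End GluedTree.

Theorem mainTheorem10 (r : nat) (hr : 2 <= r) :
  gpt (@GTadj r) = 0 /\ gpd (@GTadj r) = 0.
Proof.
have cover x := claw_center_or_between_claws x hr.
split; last exact: gpd_eq0 (@GTadj_irr r) cover.
apply: gpt_eq0 (@GTadj_irr r) _ => x.
by case: (cover x) => [[a [b [c [P3 _ _]]]] | [a [b [P3 _ _]]]]; exists a, b.
Qed.
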